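(* Let $G$ be a simple undirected graph on $\{1,\dots,n\}$ with adjacency $g_{ij}$ and degrees $d_i$. Let the exposure be binary, $e_i=I\big(\sum_jg_{ij}z_j>0\big)$, and suppose $Y_i(z_i,e_i)=\alpha_i+\beta_iz_i+\gamma_ie_i+\theta_iz_ie_i$. Under a completely randomized design with $n_t$ treated and $n_c=n-n_t$ control units, $1\le n_t\le n-1$, the estimator $$\hat\beta_{naive}=\frac{\sum_i Y_i^{obs}Z_i}{\sum_i Z_i}-\frac{\sum_i Y_i^{obs}(1-Z_i)}{\sum_i(1-Z_i)}$$ satisfies, with $\mathrm{DTE}=\frac1n\sum_i\big(Y_i(1,0)-Y_i(0,0)\big)$, $$\mathbb E[\hat\beta_{naive}]-\mathrm{DTE}=-\frac1n\sum_i\gamma_i\frac{\binom{n_c-1}{d_i-1}}{\binom{n-1}{d_i}}+\frac1n\sum_i\theta_i\left(1-\frac{\binom{n_c}{d_i}}{\binom{n-1}{d_i}}\right).$$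
   Context: Completely randomized design: $\mathbf Z$ is uniform over vectors in $\{0,1\}^n$ with exactly $n_t$ ones. $E_i=I(\sum_jg_{ij}Z_j>0)$, $Y_i^{obs}=Y_i(Z_i,E_i)$. Binomial coefficients follow the convention $\binom ab=0$ if $b<0$ or $b>a$. *)

From HB Require Import structures.
From mathcomp Require Import all_boot all_order all_algebra.
Set Implicit Arguments. Unset Strict Implicit. Unset Printing Implicit Defensive.
Import Order.TTheory GRing.Theory Num.Theory.
Local Open Scope ring_scope.

(* Binomial coefficient with integer lower index, convention binom a b = 0
   if b < 0 or b > a (upper index a is a natural number here). *)
Definition binomZ (a : nat) (b : int) : nat :=
  match b with Posz k => 'C(a, k) | Negz _ => 0%N end.

Definition simple_graph n (g : rel 'I_n) : Prop :=
  (forall i j, g i j = g j i) /\ (forall i, g i i = false).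

Definition deg n (g : rel 'I_n) (i : 'I_n) : nat := #|[set j | g i j]|.

Definition exposure n (g : rel 'I_n) (z : {ffun 'I_n -> bool}) (i : 'I_n) : bool :=
  (0 < \sum_(j < n) (g i j * z j)%N)%N.

Definition crd_support n (nt : nat) : {set {ffun 'I_n -> bool}} :=
  [set z : {ffun 'I_n -> bool} | #|[set i | z i]| == nt].

Definition Ypot (R : nzRingType) n (al be ga th : 'I_n -> R)
  (i : 'I_n) (zi ei : bool) : R :=
  al i + be i * zi%:R + ga i * ei%:R + th i * (zi && ei)%:R.

Definition Yobs (R : nzRingType) n (g : rel 'I_n) (al be ga th : 'I_n -> R)
  (z : {ffun 'I_n -> bool}) (i : 'I_n) : R :=
  Ypot al be ga th i (z i) (exposure g z i).

Definition beta_naive (R : fieldType) n (g : rel 'I_n) (al be ga th : 'I_n -> R)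
  (z : {ffun 'I_n -> bool}) : R :=
  (\sum_i Yobs g al be ga th z i * (z i)%:R) / (\sum_i (z i)%:R : R)
  - (\sum_i Yobs g al be ga th z i * (1 - (z i)%:R)) / (\sum_i (1 - (z i)%:R) : R).

Definition crd_expect (R : fieldType) n (nt : nat) (f : {ffun 'I_n -> bool} -> R) : R :=
  (\sum_(z in crd_support n nt) f z) / (#|crd_support n nt|)%:R.

Definition DTE (R : fieldType) n (al be ga th : 'I_n -> R) : R :=
  (n%:R)^-1 * \sum_i (Ypot al be ga th i true false - Ypot al be ga th i false false).

From mathcomp Require Import all_boot all_algebra.
From mathcomp Require Import zify ring.
Import GRing.Theory Num.Theory.
Set Implicit Arguments. Unset Strict Implicit. Unset Printing Implicit Defensive.

(* Under the linear outcome model, [Y_i Z_i] and [Y_i (1 - Z_i)] are linear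
   combinations of the indicators of [Z_i = 1], [Z_i = 0] and of these events
   intersected with [E_i = 0]; on the support of the design the denominators of
   the naive estimator are the constants [n_t] and [n_c], so its expectation is
   a combination of four probabilities.  Unit [i] is unexposed iff the treated
   set avoids its [d_i] neighbours, so each probability counts [n_t]-subsets of
   a set of [n] or [n - d_i] units that contain or avoid [i].  The identity
   [C(m, d) C(m - d, k) = C(m, k) C(m - k, d)] turns these counts into
   [(n_t / n) C(n_c, d_i) / C(n - 1, d_i)] and [(n_c / n) C(n_c - 1, d_i) / C(n - 1, d_i)],
   and Pascal's rule [C(n_c, d) = C(n_c - 1, d) + C(n_c - 1, d - 1)] produces the
   [gamma] term. *)

Lemma mul_bin_sub m d k : 'C(m, d) * 'C(m - d, k) = 'C(m, k) * 'C(m - k, d).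
Proof.
have vanish a b : m < a + b -> 'C(m, a) * 'C(m - a, b) = 0.
  move=> lt_m_ab; have [le_am | lt_ma] := leqP a m; last by rewrite bin_small.
  by rewrite [X in _ * X]bin_small ?muln0 //; lia.
have bin_fact2 a b : a + b <= m ->
    'C(m, a) * 'C(m - a, b) * (a`! * b`! * (m - a - b)`!) = m`!.
  move=> le_ab_m.
  rewrite -(@bin_fact m a); last lia.
  rewrite -(@bin_fact (m - a) b); last lia.
  ring.
have [le_dk_m | lt_m_dk] := leqP (d + k) m; last by rewrite !vanish // addnC.
have fact_gt0 : 0 < d`! * k`! * (m - d - k)`! by rewrite !muln_gt0 !fact_gt0.
apply/eqP; rewrite -(eqn_pmul2r fact_gt0) bin_fact2 //.
rewrite (_ : d`! * k`! * (m - d - k)`! = k`! * d`! * (m - k - d)`!) ?bin_fact2 //.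
  by rewrite addnC.
by rewrite [d`! * _]mulnC -subnDA addnC subnDA.
Qed.

Lemma card_draws_notin (T : finType) (A : {set T}) x k : x \in A ->
  #|[set S : {set T} | [&& S \subset A, #|S| == k & x \notin S]]| = 'C(#|A|.-1, k).
Proof.
move=> xA; rewrite (cardsD1 x A) xA -cards_draws.
by apply: eq_card => S; rewrite !inE subsetD1 andbAC -andbA.
Qed.

Lemma card_draws_in (T : finType) (A : {set T}) x k : x \in A ->
  #|[set S : {set T} | [&& S \subset A, #|S| == k.+1 & x \in S]]| = 'C(#|A|.-1, k).
Proof.
move=> xA.
have split_x : #|[set S : {set T} | S \subset A & #|S| == k.+1]| =
    #|[set S : {set T} | [&& S \subset A, #|S| == k.+1 & x \in S]]|
    + #|[set S : {set T} | [&& S \subset A, #|S| == k.+1 & x \notin S]]|.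
  rewrite -(cardsID [set S : {set T} | x \in S]); congr (_ + _).
    by apply: eq_card => S; rewrite !inE -andbA.
  by apply: eq_card => S; rewrite !inE andbC -andbA.
move: split_x; rewrite cards_draws card_draws_notin // (cardsD1 x A) xA binS.
by rewrite [in RHS]addnC => /addnI.
Qed.

Lemma binS_binomZ a d : 'C(a.+1, d) = 'C(a, d) + binomZ a (d%:Z - 1)%R.
Proof.
case: d => [|d]; first by rewrite !bin0.
by rewrite binS intS addrC addKr.
Qed.

Lemma deg_ltn n (g : rel 'I_n) i : g i i = false -> deg g i < n.
Proof.
move=> g_irrefl; rewrite /deg -[n in (_ < n)%N]card_ord -cardsT.
apply: proper_card; rewrite properT; apply/eqP => /setP/(_ i).
by rewrite !inE g_irrefl.
Qed.

Definition indicator {T : finType} (S : {set T}) : {ffun T -> bool} := [ffun x => x \in S].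

Lemma indicatorK {T : finType} : cancel (@indicator T) (fun z => [set x | z x]).
Proof. by move=> S; apply/setP => x; rewrite inE ffunE. Qed.

Lemma indicator_inj {T : finType} : injective (@indicator T).
Proof. exact: can_inj indicatorK. Qed.

Lemma crd_support_indicator n nt :
  crd_support n nt = indicator @: [set S : {set 'I_n} | #|S| == nt].
Proof.
rewrite (can2_imset_pre _ indicatorK); last first.
  by move=> z; apply/ffunP => x; rewrite ffunE inE.
by apply/setP => z; rewrite !inE.
Qed.

Lemma exposure_indicator n (g : rel 'I_n) S i :
  exposure g (indicator S) i = ~~ (S \subset ~: [set j | g i j]).
Proof.
rewrite /exposure lt0n sum_nat_eq0; congr negb.
apply/forallP/subsetP => [no_exp j jS | sub j]; rewrite ?inE.
  by have := no_exp j; rewrite ffunE jS muln1; case: (g i j).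
rewrite ffunE; case jS: (j \in S); last by rewrite muln0.
by have := sub j jS; rewrite !inE => /negbTE ->.
Qed.

Local Open Scope ring_scope.

Section CompletelyRandomizedDesign.
Variables (R : fieldType) (n nt : nat).
Local Notation E := (@crd_expect R n nt).

Lemma eq_crd_expect f h : {in crd_support n nt, f =1 h} -> E f = E h.
Proof. by move=> eq_fh; rewrite /crd_expect (eq_bigr _ eq_fh). Qed.

Lemma crd_expectB f h : E (fun z => f z - h z) = E f - E h.
Proof. by rewrite /crd_expect sumrB mulrBl. Qed.

Lemma crd_expectZl c f : E (fun z => c * f z) = c * E f.
Proof. by rewrite /crd_expect -mulr_sumr mulrA. Qed.

Lemma crd_expectZr c f : E (fun z => f z * c) = E f * c.
Proof. by rewrite /crd_expect -mulr_suml mulrAC. Qed.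

Lemma crd_expect_sum (I : finType) (F : I -> {ffun 'I_n -> bool} -> R) :
  E (fun z => \sum_i F i z) = \sum_i E (F i).
Proof. by rewrite /crd_expect exchange_big mulr_suml. Qed.

Lemma crd_expect_event (P : pred {ffun 'I_n -> bool}) :
  E (fun z => (P z)%:R) =
  #|[set S : {set 'I_n} | (#|S| == nt) && P (indicator S)]|%:R / 'C(n, nt)%:R.
Proof.
rewrite /crd_expect crd_support_indicator big_imset /=; last exact: in2W indicator_inj.
rewrite card_imset; last exact: indicator_inj.
rewrite -[in 'C(n, nt)](card_ord n) -card_draws; congr (_ / _%:R).
rewrite -sum1dep_card natr_sum big_mkcondr /=.
by apply: eq_big => [S | S _]; rewrite ?inE //; case: (P _).
Qed.

End CompletelyRandomizedDesign.

Lemma natr_div_eq (R : numFieldType) a b c e : (0 < b)%N -> (0 < e)%N ->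
  (a * e = c * b)%N -> a%:R / b%:R = c%:R / e%:R :> R.
Proof.
move=> b_gt0 e_gt0 eq_ac; apply/eqP.
by rewrite eqr_div ?pnatr_eq0 -?lt0n // -!natrM eq_ac.
Qed.

Section UnitProbabilities.
Variables (R : numFieldType) (n : nat) (g : rel 'I_n) (nt : nat) (i : 'I_n).
Hypotheses (g_irrefl : g i i = false) (nt_gt0 : (0 < nt)%N) (nt_le_n : (nt <= n)%N).
Local Notation E := (@crd_expect R n nt).
Local Notation d := (deg g i).
Local Notation nonneighbours := (~: [set j | g i j]).

Let n_gt0 : (0 < n)%N. Proof. exact: leq_ltn_trans (leq0n i) (ltn_ord i). Qed.
Let bin_gt0_n_nt : (0 < 'C(n, nt))%N. Proof. by rewrite bin_gt0. Qed.
Let bin_gt0_deg : (0 < 'C(n.-1, d))%N.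
Proof. by rewrite bin_gt0 -ltnS prednK // deg_ltn. Qed.

Let i_nonneighbour : i \in nonneighbours. Proof. by rewrite !inE g_irrefl. Qed.
Let card_nonneighbours : #|nonneighbours| = (n - d)%N.
Proof. by rewrite cardsCs setCK card_ord. Qed.

Let crd_prob_in (A : {set 'I_n}) (P : pred {ffun 'I_n -> bool}) : i \in A ->
    (forall S, P (indicator S) = (i \in S) && (S \subset A)) ->
  E (fun z => (P z)%:R) = 'C(#|A|.-1, nt.-1)%:R / 'C(n, nt)%:R.
Proof.
move=> iA PE; rewrite crd_expect_event -(card_draws_in nt.-1 iA) prednK //.
congr (_%:R / _); apply: eq_card => S; rewrite !inE PE.
by case: (S \subset A); case: (i \in S); rewrite ?andbT ?andbF.
Qed.

Let crd_prob_notin (A : {set 'I_n}) (P : pred {ffun 'I_n -> bool}) : i \in A ->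
    (forall S, P (indicator S) = (i \notin S) && (S \subset A)) ->
  E (fun z => (P z)%:R) = 'C(#|A|.-1, nt)%:R / 'C(n, nt)%:R.
Proof.
move=> iA PE; rewrite crd_expect_event -(card_draws_notin nt iA).
congr (_%:R / _); apply: eq_card => S; rewrite !inE PE.
by case: (S \subset A); case: (i \in S); rewrite ?andbT ?andbF.
Qed.

Lemma crd_prob_treated : E (fun z => (z i)%:R) = nt%:R / n%:R.
Proof.
rewrite (@crd_prob_in setT) ?inE => [|//|S]; last by rewrite ffunE subsetT andbT.
apply: natr_div_eq => //.
by rewrite cardsT card_ord mulnC mul_bin_diag prednK.
Qed.

Lemma crd_prob_control : E (fun z => (~~ z i)%:R) = (n - nt)%:R / n%:R.
Proof.
rewrite (@crd_prob_notin setT) ?inE => [|//|S]; last by rewrite ffunE subsetT andbT.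
apply: natr_div_eq => //.
by rewrite cardsT card_ord mulnC mul_bin_down.
Qed.

Lemma crd_prob_treated_unexposed :
  E (fun z => (z i && ~~ exposure g z i)%:R) =
  nt%:R / n%:R * ('C(n - nt, d)%:R / 'C(n.-1, d)%:R).
Proof.
rewrite (@crd_prob_in nonneighbours) => // [|S]; last first.
  by rewrite ffunE exposure_indicator negbK.
rewrite mulf_div -!natrM; apply: natr_div_eq; rewrite ?muln_gt0 ?n_gt0 //.
rewrite card_nonneighbours (_ : (n - d).-1 = n.-1 - d)%N; last lia.
rewrite mulnCA [X in (_ * X)%N]mulnC mul_bin_sub.
rewrite (_ : n.-1 - nt.-1 = n - nt)%N; last lia.
by rewrite mulnA mul_bin_diag prednK // mulnAC.
Qed.

Lemma crd_prob_control_unexposed :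
  E (fun z => (~~ z i && ~~ exposure g z i)%:R) =
  (n - nt)%:R / n%:R * ('C((n - nt).-1, d)%:R / 'C(n.-1, d)%:R).
Proof.
rewrite (@crd_prob_notin nonneighbours) => // [|S]; last first.
  by rewrite ffunE exposure_indicator negbK.
rewrite mulf_div -!natrM; apply: natr_div_eq; rewrite ?muln_gt0 ?n_gt0 //.
rewrite card_nonneighbours (_ : (n - d).-1 = n.-1 - d)%N; last lia.
rewrite mulnCA [X in (_ * X)%N]mulnC mul_bin_sub.
rewrite (_ : n.-1 - nt = (n - nt).-1)%N; last lia.
by rewrite mulnA mul_bin_down mulnAC.
Qed.

End UnitProbabilities.

Section NaiveEstimator.
Variables (R : fieldType) (n : nat) (g : rel 'I_n) (al be ga th : 'I_n -> R).
Local Notation Y := (Yobs g al be ga th).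

Lemma Yobs_treated z i : Y z i * (z i)%:R =
  (al i + be i + ga i + th i) * (z i)%:R - (ga i + th i) * (z i && ~~ exposure g z i)%:R.
Proof. by rewrite /Yobs /Ypot; case: (z i); case: (exposure g z i) => /=; ring. Qed.

Lemma Yobs_control z i : Y z i * (1 - (z i)%:R) =
  (al i + ga i) * (~~ z i)%:R - ga i * (~~ z i && ~~ exposure g z i)%:R.
Proof. by rewrite /Yobs /Ypot; case: (z i); case: (exposure g z i) => /=; ring. Qed.

Lemma DTEE : DTE al be ga th = n%:R^-1 * \sum_i be i.
Proof. by rewrite /DTE /Ypot; congr (_ * _); apply: eq_big => // i _ /=; ring. Qed.

Variable nt : nat.
Local Notation E := (@crd_expect R n nt).

Lemma crd_expect_Yobs_treated i : E (fun z => Y z i * (z i)%:R) =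
  (al i + be i + ga i + th i) * E (fun z => (z i)%:R)
  - (ga i + th i) * E (fun z => (z i && ~~ exposure g z i)%:R).
Proof. by rewrite (eq_crd_expect (in1W (Yobs_treated ^~ i))) crd_expectB !crd_expectZl. Qed.

Lemma crd_expect_Yobs_control i : E (fun z => Y z i * (1 - (z i)%:R)) =
  (al i + ga i) * E (fun z => (~~ z i)%:R)
  - ga i * E (fun z => (~~ z i && ~~ exposure g z i)%:R).
Proof. by rewrite (eq_crd_expect (in1W (Yobs_control ^~ i))) crd_expectB !crd_expectZl. Qed.

Lemma beta_naive_crd : (nt <= n)%N -> {in crd_support n nt, forall z,
  beta_naive g al be ga th z =
  \sum_i (Y z i * (z i)%:R / nt%:R - Y z i * (1 - (z i)%:R) / (n - nt)%:R)}.
Proof.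
move=> nt_le_n z /[!inE] /eqP card_z.
have sum_treated : \sum_i (z i)%:R = nt%:R :> R.
  rewrite -card_z -sum1dep_card natr_sum [RHS]big_mkcond.
  by apply: eq_bigr => i _; case: (z i).
have sum_control : \sum_i (1 - (z i)%:R) = (n - nt)%:R :> R.
  by rewrite sumrB sumr_const card_ord sum_treated natrB.
by rewrite /beta_naive sum_treated sum_control !mulr_suml -sumrB.
Qed.

End NaiveEstimator.

Theorem proposition14 (R : realFieldType) (n : nat) (g : rel 'I_n)
  (al be ga th : 'I_n -> R) (nt : nat) :
  simple_graph g -> (1 <= nt)%N -> (nt <= n - 1)%N ->
  let nc := (n - nt)%N in
  crd_expect nt (beta_naive g al be ga th) - DTE al be ga th =
  - (n%:R)^-1 * \sum_i ga i * ((binomZ (nc - 1) ((deg g i)%:Z - 1))%:R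
                                / ('C(n - 1, deg g i))%:R)
  + (n%:R)^-1 * \sum_i th i * (1 - ('C(nc, deg g i))%:R / ('C(n - 1, deg g i))%:R).
Proof.
move=> [_ g_irrefl] nt_gt0 nt_lt_n nc; rewrite {}/nc.
have nt_le_n : (nt <= n)%N by lia.
have nc_gt0 : (0 < n - nt)%N by lia.
rewrite (eq_crd_expect (beta_naive_crd g al be ga th nt_le_n)) crd_expect_sum DTEE.
rewrite mulr_sumr -sumrB mulNr -mulrN -mulrDr -sumrN -big_split mulr_sumr /=.
apply: eq_bigr => i _.
rewrite crd_expectB !crd_expectZr crd_expect_Yobs_treated crd_expect_Yobs_control.
rewrite crd_prob_treated // crd_prob_control // crd_prob_treated_unexposed //.
rewrite crd_prob_control_unexposed // !subn1.
rewrite -[in 'C(n - nt, _)](prednK nc_gt0) binS_binomZ natrD.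
have d_lt_n := deg_ltn (g_irrefl i).
by field; apply/and4P; split; rewrite pnatr_eq0 -lt0n ?bin_gt0; lia.
Qed.
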